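(* Let $q\in\mathbb{R}$ with $q\neq 0$ and let $\hbar\in\mathbb{R}$. Let $\mathcal{H}$ be the unital associative $\mathbb{C}$-algebra generated by $\hat{x},\hat{p},\hat{\Lambda}$ subject to the relations \[ q^{1/2}\hat{x}\hat{p}-q^{-1/2}\hat{p}\hat{x}=i\hbar\hat{\Lambda},\qquad \hat{\Lambda}\hat{x}=q^{-1}\hat{x}\hat{\Lambda},\qquad \hat{\Lambda}\hat{p}=q\hat{p}\hat{\Lambda}. \] Then $\mathcal{H}$ is (via the identity on generators) the iterated Ore extension \[ R=\mathbb{C}[\hat{\Lambda}][\hat{p};\sigma_{\hat{p}},\delta_{\hat{p}}][\hat{x};\sigma_{\hat{x}},\delta_{\hat{x}}] \] whose data are given by \[ \sigma_{\hat{p}}(\hat{\Lambda})=q^{-1}\hat{\Lambda},\quad \delta_{\hat{p}}(\hat{\Lambda})=0,\quad \sigma_{\hat{x}}(\hat{\Lambda})=q\hat{\Lambda},\quad \delta_{\hat{x}}(\hat{\Lambda})=0,\quad \sigma_{\hat{x}}(\hat{p})=q^{-1}\hat{p},\quad \delta_{\hat{x}}(\hat{p})=i\hbar q^{-1/2}\hat{\Lambda}; \] in particular these prescriptions define an automorphism $\sigma_{\hat{p}}$ of $\mathbb{C}[\hat{\Lambda}]$ with $\sigma_{\hat{p}}$-derivation $\delta_{\hat{p}}$, and an automorphism $\sigma_{\hat{x}}$ of $\mathbb{C}[\hat{\Lambda}][\hat{p};\sigma_{\hat{p}},\delta_{\hat{p}}]$ with $\sigma_{\hat{x}}$-derivation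 $\delta_{\hat{x}}$.
   Context: An Ore extension $A[t;\sigma,\delta]$ of a ring $A$, for a ring endomorphism $\sigma$ of $A$ and a $\sigma$-derivation $\delta$ of $A$ (i.e. $\delta(ab)=\sigma(a)\delta(b)+\delta(a)b$), is the ring of polynomials $\sum a_i t^i$ with multiplication determined by $ta=\sigma(a)t+\delta(a)$ for $a\in A$. The algebra above is the $q$-deformed Heisenberg algebra of Wess (position $\hat{x}$, momentum $\hat{p}$, auxiliary generator $\hat{\Lambda}$). *)

From HB Require Import structures.
From mathcomp Require Import all_boot all_order all_algebra.
From mathcomp Require Import complex reals.

Set Implicit Arguments.
Unset Strict Implicit.
Unset Printing Implicit Defensive.

Import Order.TTheory GRing.Theory Num.Theory.
Local Open Scope ring_scope.

(* d is a sigma-derivation of A: d(ab) = s(a) d(b) + d(a) b.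
   (Additivity / K-linearity is imposed by taking d : {linear A -> A}.) *)
Definition sigma_derivation (A : nzRingType) (s d : A -> A) : Prop :=
  forall a b : A, d (a * b) = s a * d b + d a * b.

(* S = A[t; sigma, delta] (Goodearl--Warfield's definition of an Ore
   extension): A embeds in S via iota, t a = sigma(a) t + delta(a) for a in A,
   and S is a free left A-module with basis 1, t, t^2, ...
   (every element is a finite sum  sum_i a_i t^i, and such sums vanish only
   if all coefficients vanish). *)
Definition is_ore_ext (K : fieldType) (A S : algType K)
    (iota : {lrmorphism A -> S}) (sigma delta : A -> A) (t : S) : Prop :=
  [/\ forall a : A, t * iota a = iota (sigma a) * t + iota (delta a),
      forall s : S, exists c : seq A,
        s = \sum_(i < size c) iota c`_i * t ^+ i
    & forall c : seq A,
        \sum_(i < size c) iota c`_i * t ^+ i = 0 -> forall i, c`_i = 0 ].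

Local Open Scope complex_scope.

(* q^{1/2} : the principal complex square root of q (q real, q may be < 0). *)
Definition sqrtq (R : realType) (q : R) : R[i] := sqrtc (q%:C).

Definition iC (R : realType) : R[i] := Complex 0 1.

Definition heis_rel (R : realType) (q hb : R) (B : algType R[i])
    (x p L : B) : Prop :=
  [/\ sqrtq q *: (x * p) - (sqrtq q)^-1 *: (p * x) = (iC R * hb%:C) *: L,
      L * x = (q%:C)^-1 *: (x * L)
    & L * p = q%:C *: (p * L) ].

Definition heis_presentation (R : realType) (q hb : R) (H : algType R[i])
    (x p L : H) : Prop :=
  heis_rel q hb x p L /\
  forall (B : algType R[i]) (x' p' L' : B), heis_rel q hb x' p' L' ->
    exists f : {lrmorphism H -> B},
      [/\ f x = x', f p = p', f L = L'
        & forall g : {lrmorphism H -> B},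
            g x = x' -> g p = p' -> g L = L' -> g =1 f].

(* The monomials L^a p^b x^c are linearly independent: by the universal
   property, H acts on the space of functions nat^3 -> C through the formulas
   of its own left regular representation written in the coordinates of these
   monomials, and the monomial L^a p^b x^c sends the indicator of (0,0,0) to the
   indicator of (a,b,c).  The left C[L]-polynomials in p form a subalgebra A1,
   because p P(L) = P(q^-1 L) p; independence makes it the first Ore extension.
   Next, x a lies in A1 x + A1 for a = L and a = p, and this property is stable
   under sums and products, so it holds on all of A1.  Hence the left
   A1-polynomials in x are closed under products; as they contain x, p and L,
   the universal property makes them all of H, and the unique decomposition
   x a = sigma(a) x + delta(a) defines the twisting maps.  Finally sigma
   rescales L by q and p by q^-1, hence is bijective. *)

From HB Require Import structures.
From mathcomp Require Import all_boot all_order all_algebra.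
From mathcomp Require Import complex reals boolp classical_sets functions ring.

Set Implicit Arguments.
Unset Strict Implicit.
Unset Printing Implicit Defensive.

Import Order.TTheory GRing.Theory Num.Theory.
Local Open Scope ring_scope.

Section LinearEndomorphisms.
(* [T] is pointed only to make the algebra of endomorphisms nontrivial. *)
Variables (T : pointedType) (K : comNzRingType).

Record lend := Lend {
  lend_fun :> (T -> K^o) -> T -> K^o;
  lend_linear : linear lend_fun }.

HB.instance Definition _ (f : lend) :=
  GRing.isLinear.Build K (T -> K^o) (T -> K^o) *:%R f (lend_linear f).

Lemma lendP (f g : lend) : f =1 g -> f = g.
Proof.
case: f g => f lf [g lg] /= /funext fg; subst g.
by congr Lend; exact: Prop_irrelevance.
Qed.

HB.instance Definition _ := gen_eqMixin lend.
HB.instance Definition _ := gen_choiceMixin lend.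

Definition lend0 := Lend (linearP (\0 : {linear (T -> K^o) -> T -> K^o})).
Definition lend_add (f g : lend) := Lend (linearP (f \+ g)).
Definition lend_opp (f : lend) := Lend (linearP (\- f)).
Definition lend1 := Lend (linearP (@idfun (T -> K^o))).
Definition lend_mul (f g : lend) := Lend (linearP (f \o g)).
Definition lend_scale (k : K) (f : lend) := Lend (linearP (k \*: f)).

Lemma lend_addA : associative lend_add.
Proof. by move=> f g h; apply: lendP => v /=; rewrite addrA. Qed.
Lemma lend_addC : commutative lend_add.
Proof. by move=> f g; apply: lendP => v /=; rewrite addrC. Qed.
Lemma lend_add0 : left_id lend0 lend_add.
Proof. by move=> f; apply: lendP => v /=; rewrite add0r. Qed.
Lemma lend_addN : left_inverse lend0 lend_opp lend_add.
Proof. by move=> f; apply: lendP => v /=; rewrite addNr. Qed.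
HB.instance Definition _ := GRing.isZmodule.Build lend lend_addA lend_addC lend_add0 lend_addN.

Lemma lend_mulA : associative lend_mul. Proof. by move=> f g h; apply: lendP. Qed.
Lemma lend_mul1 : left_id lend1 lend_mul. Proof. by move=> f; apply: lendP. Qed.
Lemma lend_mulr1 : right_id lend1 lend_mul. Proof. by move=> f; apply: lendP. Qed.
Lemma lend_mulDl : left_distributive lend_mul lend_add.
Proof. by move=> f g h; apply: lendP. Qed.
Lemma lend_mulDr : right_distributive lend_mul lend_add.
Proof. by move=> f g h; apply: lendP => v /=; rewrite linearD. Qed.
Lemma lend1_neq0 : lend1 != lend0.
Proof.
apply/eqP => /(congr1 (fun f : lend => f (cst 1) point)) /=.
by move/eqP; rewrite oner_eq0.
Qed.
HB.instance Definition _ := GRing.Zmodule_isNzRing.Build lend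
  lend_mulA lend_mul1 lend_mulr1 lend_mulDl lend_mulDr lend1_neq0.

Lemma lend_scaleA a b f : lend_scale a (lend_scale b f) = lend_scale (a * b) f.
Proof. by apply: lendP => v /=; rewrite scalerA. Qed.
Lemma lend_scale1 : left_id 1 lend_scale.
Proof. by move=> f; apply: lendP => v /=; rewrite scale1r. Qed.
Lemma lend_scaleDr : right_distributive lend_scale +%R.
Proof. by move=> k f g; apply: lendP => v /=; rewrite scalerDr. Qed.
Lemma lend_scaleDl f : {morph lend_scale^~ f : a b / a + b}.
Proof. by move=> a b; apply: lendP => v /=; rewrite scalerDl. Qed.
HB.instance Definition _ := GRing.Zmodule_isLmodule.Build K lend
  lend_scaleA lend_scale1 lend_scaleDr lend_scaleDl.
Lemma lend_scaleAl (a : K) (f g : lend) : a *: (f * g) = (a *: f) * g.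
Proof. by apply: lendP. Qed.
HB.instance Definition _ := GRing.Lmodule_isLalgebra.Build K lend lend_scaleAl.
Lemma lend_scaleAr (a : K) (f g : lend) : a *: (f * g) = f * (a *: g).
Proof. by apply: lendP => v /=; rewrite linearZ. Qed.
HB.instance Definition _ := GRing.Lalgebra_isAlgebra.Build K lend lend_scaleAr.

Lemma lend_exprE (f : lend) n v : (f ^+ n) v = iter n f v.
Proof. by elim: n => // n IH; rewrite exprS /= IH. Qed.

End LinearEndomorphisms.

Section Subalgebra.
Variables (K : fieldType) (B : algType K) (S : subalgClosed B).

Record subalg := Subalg { subalg_val : B; _ : subalg_val \in S }.
HB.instance Definition _ := [isSub for subalg_val].
HB.instance Definition _ := [Choice of subalg by <:].
HB.instance Definition _ := [SubChoice_isSubAlgebra of subalg by <:].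

(* Through the named projection, [val] is inferred as an [lrmorphism]. *)
HB.instance Definition _ := GRing.RMorphism.copy subalg_val (val : subalg -> B).
HB.instance Definition _ := GRing.Linear.copy subalg_val (val : subalg -> B).

End Subalgebra.
Arguments subalg_val {K B S}.

Section HornerLR.
Variables (K : fieldType) (B : algType K) (b : B).

(* [horner_alg b] packaged as an [lrmorphism]: the library infers only its
   [rmorphism] structure when [K] is a field. *)
Definition horner_lr : {poly K} -> B := horner_alg b.
HB.instance Definition _ := GRing.RMorphism.copy horner_lr (horner_alg b).
Fact horner_lr_is_scalable : scalable horner_lr.
Proof. by move=> k P; rewrite -mul_polyC rmorphM /= /horner_lr horner_algC mulr_algl. Qed.
HB.instance Definition _ :=
  GRing.isScalable.Build K {poly K} B *:%R horner_lr horner_lr_is_scalable.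

Lemma horner_lrX : horner_lr 'X = b. Proof. exact: horner_algX. Qed.

End HornerLR.

Section OrePolynomials.
Variables (K : fieldType) (A S : algType K) (iota : {lrmorphism A -> S}) (t : S).

Definition ore_poly (c : seq A) : S := \sum_(i < size c) iota c`_i * t ^+ i.

Definition ore_polys : {pred S} := fun s => `[< exists c, s = ore_poly c >].

Lemma ore_polyP s : reflect (exists c, s = ore_poly c) (s \in ore_polys).
Proof. exact: asboolP. Qed.

Lemma ore_poly_widen c n : (size c <= n)%N ->
  ore_poly c = \sum_(i < n) iota c`_i * t ^+ i.
Proof.
move=> hn; rewrite /ore_poly (big_ord_widen n (fun i => iota c`_i * t ^+ i)) //.
rewrite big_mkcond; apply: eq_bigr => i _; case: ltnP => // hi.
by rewrite nth_default // rmorph0 mul0r.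
Qed.

Lemma ore_polyD c1 c2 : ore_poly c1 + ore_poly c2 =
  ore_poly (mkseq (fun i => c1`_i + c2`_i) (maxn (size c1) (size c2))).
Proof.
rewrite (@ore_poly_widen c1 (maxn (size c1) (size c2))) ?leq_maxl //.
rewrite (@ore_poly_widen c2 (maxn (size c1) (size c2))) ?leq_maxr //.
rewrite /ore_poly size_mkseq -big_split; apply: eq_bigr => i _.
by rewrite nth_mkseq // rmorphD mulrDl.
Qed.

Lemma ore_polyMl a c : iota a * ore_poly c = ore_poly (map ( *%R a) c).
Proof.
rewrite /ore_poly size_map mulr_sumr; apply: eq_bigr => i _.
by rewrite (nth_map 0) // rmorphM mulrA.
Qed.

Lemma ore_polyZ k c : k *: ore_poly c = ore_poly (map ( *:%R k) c).
Proof.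
rewrite /ore_poly size_map scaler_sumr; apply: eq_bigr => i _.
by rewrite (nth_map 0) // linearZ scalerAl.
Qed.

Lemma ore_poly_cons a c : ore_poly (a :: c) = iota a + ore_poly c * t.
Proof.
rewrite /ore_poly /= big_ord_recl /= expr0 mulr1 mulr_suml; congr (_ + _).
by apply: eq_bigr => i _; rewrite exprSr mulrA.
Qed.

Lemma ore_polys0 : 0 \in ore_polys.
Proof. by apply/ore_polyP; exists [::]; rewrite /ore_poly big_ord0. Qed.

Lemma ore_polysD : {in ore_polys &, forall s1 s2, s1 + s2 \in ore_polys}.
Proof.
by move=> _ _ /ore_polyP[c1 ->] /ore_polyP[c2 ->]; apply/ore_polyP; eexists; apply: ore_polyD.
Qed.

Lemma ore_polysZ k : {in ore_polys, forall s, k *: s \in ore_polys}.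
Proof. by move=> _ /ore_polyP[c ->]; apply/ore_polyP; eexists; apply: ore_polyZ. Qed.

Lemma ore_polys_iotaM a : {in ore_polys, forall s, iota a * s \in ore_polys}.
Proof. by move=> _ /ore_polyP[c ->]; apply/ore_polyP; eexists; apply: ore_polyMl. Qed.

Lemma ore_polys_iota a : iota a \in ore_polys.
Proof.
by apply/ore_polyP; exists [:: a]; rewrite /ore_poly big_ord1 expr0 mulr1.
Qed.

Lemma ore_polysMt : {in ore_polys, forall s, s * t \in ore_polys}.
Proof.
move=> _ /ore_polyP[c ->]; apply/ore_polyP; exists (0 :: c).
by rewrite ore_poly_cons rmorph0 add0r.
Qed.

Lemma ore_polys_t : t \in ore_polys.
Proof. by rewrite -[t]mul1r -(rmorph1 iota) ore_polysMt ?ore_polys_iota. Qed.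

Hypothesis ore_comm : forall a, exists a12 : A * A, t * iota a = iota a12.1 * t + iota a12.2.

Lemma ore_polys_tM : {in ore_polys, forall s, t * s \in ore_polys}.
Proof.
move=> _ /ore_polyP[c ->]; elim: c => [|a c IH].
  by rewrite /ore_poly big_ord0 mulr0 ore_polys0.
have [[a1 a2] e] := ore_comm a.
rewrite ore_poly_cons mulrDr mulrA e.
by rewrite !ore_polysD ?ore_polysMt ?ore_polys_iota.
Qed.

Lemma ore_polysM : {in ore_polys &, forall s1 s2, s1 * s2 \in ore_polys}.
Proof.
move=> _ s2 /ore_polyP[c ->] s2P; rewrite /ore_poly mulr_suml.
apply: (big_ind (fun s => s \in ore_polys)) => [||i _]; first exact: ore_polys0.
  exact: ore_polysD.
rewrite -!mulrA; apply: ore_polys_iotaM; elim: (nat_of_ord i) => [|n IH].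
  by rewrite expr0 mul1r.
by rewrite exprS -mulrA; apply: ore_polys_tM.
Qed.

Lemma ore_polys_subalg_closed : GRing.subalg_closed ore_polys.
Proof.
split; first by rewrite -(rmorph1 iota) ore_polys_iota.
  by move=> k u v uP vP; apply: ore_polysD => //; apply: ore_polysZ.
exact: ore_polysM.
Qed.

Definition ore_polys_subalg : subalgClosed S :=
  HB.pack ore_polys (GRing.isSubalgClosed.Build K S ore_polys ore_polys_subalg_closed).

End OrePolynomials.

Section OreUniqueness.
Variables (K : fieldType) (A S : algType K) (iota : {lrmorphism A -> S}) (t : S).
Hypothesis ore_free : forall c, ore_poly iota t c = 0 -> forall i, c`_i = 0.

Lemma ore_coef_inj a1 a2 b1 b2 :
  iota a1 * t + iota a2 = iota b1 * t + iota b2 -> (a1, a2) = (b1, b2).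
Proof.
move=> e; have c0 : ore_poly iota t [:: a2 - b2; a1 - b1] = 0.
  rewrite !ore_poly_cons /ore_poly big_ord0 mul0r addr0 !rmorphB.
  by rewrite mulrBl addrACA -opprD [iota a2 + _]addrC [iota b2 + _]addrC e subrr.
by congr pair; apply/eqP; rewrite -subr_eq0; apply/eqP;
  [apply: (ore_free c0 1) | apply: (ore_free c0 0)].
Qed.

Lemma ore_comm_unique :
  (forall a, exists a12 : A * A, t * iota a = iota a12.1 * t + iota a12.2) ->
  forall a, exists! a12 : A * A, t * iota a = iota a12.1 * t + iota a12.2.
Proof.
move=> comm a; have [[a1 a2] e] := comm a; exists (a1, a2); split=> // -[b1 b2] e'.
by apply: ore_coef_inj; rewrite -e -e'.
Qed.

End OreUniqueness.

Section OreCoefficients.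
Variables (K : fieldType) (A S : algType K) (iota : {lrmorphism A -> S}) (t : S).
Hypothesis ore_comm :
  forall a, exists! a12 : A * A, t * iota a = iota a12.1 * t + iota a12.2.

Definition ore_sigma a := (sval (cid (ore_comm a))).1.
Definition ore_delta a := (sval (cid (ore_comm a))).2.

Lemma ore_commE a : t * iota a = iota (ore_sigma a) * t + iota (ore_delta a).
Proof. exact: (svalP (cid (ore_comm a))).1. Qed.

Lemma ore_sigma_deltaE a a1 a2 :
  t * iota a = iota a1 * t + iota a2 -> ore_sigma a = a1 /\ ore_delta a = a2.
Proof.
by move=> e; rewrite /ore_sigma /ore_delta ((svalP (cid (ore_comm a))).2 (a1, a2) e).
Qed.

Lemma ore_sigma_deltaB a b : ore_sigma (a - b) = ore_sigma a - ore_sigma b /\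
  ore_delta (a - b) = ore_delta a - ore_delta b.
Proof.
by apply: ore_sigma_deltaE; rewrite !rmorphB mulrBr !ore_commE mulrBl opprD addrACA.
Qed.

Lemma ore_sigma_deltaZ k a :
  ore_sigma (k *: a) = k *: ore_sigma a /\ ore_delta (k *: a) = k *: ore_delta a.
Proof. by apply: ore_sigma_deltaE; rewrite !linearZ -scalerAr ore_commE scalerDr scalerAl. Qed.

Lemma ore_sigma_delta1 : ore_sigma 1 = 1 /\ ore_delta 1 = 0.
Proof. by apply: ore_sigma_deltaE; rewrite rmorph1 rmorph0 mulr1 mul1r addr0. Qed.

Lemma ore_sigma_deltaM a b : ore_sigma (a * b) = ore_sigma a * ore_sigma b /\
  ore_delta (a * b) = ore_sigma a * ore_delta b + ore_delta a * b.
Proof.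
apply: ore_sigma_deltaE; rewrite !rmorphM rmorphD !rmorphM mulrA ore_commE mulrDl.
by rewrite -mulrA ore_commE mulrDr !mulrA addrA.
Qed.

Fact ore_sigma_is_zmod_morphism : zmod_morphism ore_sigma.
Proof. by move=> a b; case: (ore_sigma_deltaB a b). Qed.
Fact ore_sigma_is_monoid_morphism : monoid_morphism ore_sigma.
Proof. by split=> [|a b]; [case: ore_sigma_delta1 | case: (ore_sigma_deltaM a b)]. Qed.
Fact ore_sigma_is_scalable : scalable ore_sigma.
Proof. by move=> k a; case: (ore_sigma_deltaZ k a). Qed.
HB.instance Definition _ :=
  GRing.isZmodMorphism.Build A A ore_sigma ore_sigma_is_zmod_morphism.
HB.instance Definition _ :=
  GRing.isMonoidMorphism.Build A A ore_sigma ore_sigma_is_monoid_morphism.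
HB.instance Definition _ :=
  GRing.isScalable.Build K A A *:%R ore_sigma ore_sigma_is_scalable.

Fact ore_delta_is_zmod_morphism : zmod_morphism ore_delta.
Proof. by move=> a b; case: (ore_sigma_deltaB a b). Qed.
Fact ore_delta_is_scalable : scalable ore_delta.
Proof. by move=> k a; case: (ore_sigma_deltaZ k a). Qed.
HB.instance Definition _ :=
  GRing.isZmodMorphism.Build A A ore_delta ore_delta_is_zmod_morphism.
HB.instance Definition _ :=
  GRing.isScalable.Build K A A *:%R ore_delta ore_delta_is_scalable.

Lemma ore_delta_sigma_derivation : sigma_derivation ore_sigma ore_delta.
Proof. by move=> a b; case: (ore_sigma_deltaM a b). Qed.

Lemma is_ore_ext_ore_polys :
  (forall c, ore_poly iota t c = 0 -> forall i, c`_i = 0) ->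
  (forall s, s \in ore_polys iota t) -> is_ore_ext iota ore_sigma ore_delta t.
Proof.
by move=> free span; split=> [a | s | ]; [exact: ore_commE | exact/ore_polyP | exact: free].
Qed.

End OreCoefficients.

Section OreStable.
Variables (K : fieldType) (S : algType K) (B : subalgClosed S) (t : S).

Definition ore_stable : {pred S} := fun b =>
  (b \in B) && `[< exists b1 b2, [/\ b1 \in B, b2 \in B & t * b = b1 * t + b2] >].

Lemma ore_stableP b : reflect
  (b \in B /\ exists b1 b2, [/\ b1 \in B, b2 \in B & t * b = b1 * t + b2])
  (b \in ore_stable).
Proof. by apply: (iffP andP) => -[? /asboolP]. Qed.

Lemma ore_stable_subalg_closed : GRing.subalg_closed ore_stable.
Proof.
split.
- apply/ore_stableP; split; first exact: rpred1.
  by exists 1, 0; rewrite rpred1 rpred0 mulr1 mul1r addr0.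
- move=> k u v /ore_stableP[uB [u1 [u2 [u1B u2B eu]]]] /ore_stableP[vB [v1 [v2 [v1B v2B ev]]]].
  apply/ore_stableP; split; first by rewrite rpredD ?rpredZ.
  exists (k *: u1 + v1), (k *: u2 + v2); rewrite !rpredD ?rpredZ //; split=> //.
  by rewrite mulrDr -scalerAr eu ev !mulrDl -scalerAl scalerDr addrACA.
- move=> u v /ore_stableP[uB [u1 [u2 [u1B u2B eu]]]] /ore_stableP[vB [v1 [v2 [v1B v2B ev]]]].
  apply/ore_stableP; split; first by rewrite rpredM.
  exists (u1 * v1), (u1 * v2 + u2 * v); rewrite rpredD ?rpredM //; split=> //.
  by rewrite mulrA eu mulrDl -[u1 * t * v]mulrA ev mulrDr !mulrA addrA.
Qed.

HB.instance Definition _ :=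
  GRing.isSubalgClosed.Build K S ore_stable ore_stable_subalg_closed.

End OreStable.

Lemma rpred_horner_alg (K : fieldType) (S : algType K) (B : subalgClosed S) a P :
  a \in B -> horner_alg a P \in B.
Proof.
move=> aB; elim/poly_ind: P => [|P c IH]; first by rewrite rmorph0 rpred0.
by rewrite rmorphD rmorphM /= horner_algX horner_algC rpredD ?rpredM ?rpredZ ?rpred1.
Qed.

Lemma ore_polys_sub (K : fieldType) (A S : algType K) (iota : {lrmorphism A -> S}) t
    (B : subalgClosed S) :
  (forall a, iota a \in B) -> t \in B -> {subset ore_polys iota t <= B}.
Proof.
move=> iotaB tB _ /ore_polyP[c ->]; apply: rpred_sum => i _.
by rewrite rpredM ?rpredX.
Qed.

Lemma horner_alg_skew_comm (K : fieldType) (S : algType K) (a t : S) (k : K) P :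
  t * a = k *: (a * t) -> t * horner_alg a P = horner_alg a (P \Po (k *: 'X)) * t.
Proof.
move=> ta; elim/poly_ind: P => [|P c IH]; first by rewrite comp_poly0 !rmorph0 mulr0 mul0r.
rewrite comp_polyD comp_polyM comp_polyX comp_polyC !rmorphD !rmorphM /= !horner_algX.
rewrite !horner_algC linearZ /= horner_algX mulrDr [t * (_ * a)]mulrA IH -mulrA ta.
by rewrite mulrDl mulr_algr mulr_algl -mulrA mulr_algl -scalerAl.
Qed.

Lemma comp_polyZXK (K : fieldType) (k : K) : k != 0 ->
  cancel (comp_poly (k *: 'X)) (comp_poly (k^-1 *: 'X)).
Proof.
move=> k0 P; rewrite -comp_polyA comp_polyZ comp_polyX scalerA mulfV //.
by rewrite scale1r comp_polyXr.
Qed.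

Lemma comp_polyZX_bij (K : fieldType) (k : K) :
  k != 0 -> bijective (comp_poly (k *: 'X)).
Proof.
move=> k0; exists (comp_poly (k^-1 *: 'X)); first exact: comp_polyZXK.
by have := comp_polyZXK (invr_neq0 k0); rewrite invrK.
Qed.

Lemma sumr_delta (M : pzRingType) n (F : nat -> M) (k : nat) :
  \sum_(i < n) F i * (k == i)%:R = if (k < n)%N then F k else 0.
Proof.
rewrite -(@big_ord1_eq M 0 +%R) [RHS]big_mkcond; apply: eq_bigr => i _.
by rewrite mulr_natr eq_sym; case: eqP.
Qed.

Section PBWRepresentation.
Variables (K : fieldType) (Q kap : K).
Hypothesis Q0 : Q != 0.
Local Notation V := (nat * nat * nat -> K^o).

(* From x p^b = Q^-b p^b x + kap (qnat b) L p^(b-1). *)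
Definition qnat (b : nat) : K := \sum_(j < b) (Q ^+ 2)^-1 ^+ j.

Lemma qnat0 : qnat 0 = 0.
Proof. exact: big_ord0. Qed.

Lemma qnatS b : qnat b.+1 = 1 + (Q ^+ 2)^-1 * qnat b.
Proof.
rewrite /qnat big_ord_recl expr0 mulr_sumr; congr (_ + _).
by apply: eq_bigr => i _; rewrite lift0 exprS.
Qed.

(* Left multiplication by L, p and x, acting on the coefficients [v (a, b, c)]
   of the monomials L^a p^b x^c. *)
Definition pbw_Lf (v : V) : V := fun '(a, b, c) => if a is a.+1 then v (a, b, c) else 0.
Definition pbw_Pf (v : V) : V := fun '(a, b, c) =>
  if b is b.+1 then (Q ^+ a)^-1 * v (a, b, c) else 0.
Definition pbw_Xf (v : V) : V := fun '(a, b, c) =>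
  (if c is c.+1 then Q ^+ a / Q ^+ b * v (a, b, c) else 0) +
  (if a is a.+1 then kap * Q ^+ a * qnat b.+1 * v (a, b.+1, c) else 0).

Fact pbw_Lf_linear : linear pbw_Lf.
Proof.
by move=> k u v; apply: funext => -[[[|a] b] c]; rewrite !fctE /= ?scaler0 ?addr0.
Qed.
Fact pbw_Pf_linear : linear pbw_Pf.
Proof.
move=> k u v; apply: funext => -[[a [|b]] c]; rewrite !fctE /= ?scaler0 ?addr0 //.
by rewrite /GRing.scale /=; ring.
Qed.
Fact pbw_Xf_linear : linear pbw_Xf.
Proof.
by move=> k u v; apply: funext => -[[[|a] b] [|c]]; rewrite !fctE /GRing.scale /=; ring.
Qed.

Definition pbw_L := Lend pbw_Lf_linear.
Definition pbw_P := Lend pbw_Pf_linear.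
Definition pbw_X := Lend pbw_Xf_linear.

Lemma pbw_LX : pbw_L * pbw_X = Q^-1 *: (pbw_X * pbw_L).
Proof.
apply: lendP => v; apply: funext => -[[[|[|a]] b] [|c]]; rewrite /= !fctE /GRing.scale /=.
all: rewrite ?exprS; field; by rewrite ?oner_neq0 ?expf_neq0 ?mulf_neq0 ?Q0.
Qed.

Lemma pbw_LP : pbw_L * pbw_P = Q *: (pbw_P * pbw_L).
Proof.
apply: lendP => v; apply: funext => -[[[|a] [|b]] c]; rewrite /= !fctE /GRing.scale /=.
all: rewrite ?exprS; field; by rewrite ?oner_neq0 ?expf_neq0 ?mulf_neq0 ?Q0.
Qed.

Lemma pbw_XP (s : K) : s != 0 -> Q = s ^+ 2 ->
  s *: (pbw_X * pbw_P) = s^-1 *: (pbw_P * pbw_X) + (kap * s) *: pbw_L.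
Proof.
move=> s0 Qs; apply: lendP => v; apply: funext => -[[[|a] [|b]] [|c]].
all: rewrite /= !fctE /GRing.scale /= ?qnatS ?qnat0 ?exprS ?Qs.
all: field; by rewrite ?oner_neq0 ?expf_neq0 ?s0.
Qed.

Definition pbw_delta (t : nat * nat * nat) : V := fun t' => (t' == t)%:R.

Lemma pbw_L_delta a b c : pbw_L (pbw_delta (a, b, c)) = pbw_delta (a.+1, b, c).
Proof. by apply: funext => -[[[|a'] b'] c']; rewrite /pbw_delta /= ?xpair_eqE ?eqE. Qed.

Lemma pbw_P_delta b c : pbw_P (pbw_delta (0, b, c)) = pbw_delta (0, b.+1, c).
Proof.
apply: funext => -[[[|a'] [|b']] c']; rewrite /pbw_delta /= ?xpair_eqE ?eqE /=.
all: by rewrite ?expr0 ?invr1 ?mul1r ?mulr0.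
Qed.

Lemma pbw_X_delta c : pbw_X (pbw_delta (0, 0, c)) = pbw_delta (0, 0, c.+1).
Proof.
apply: funext => -[[[|a'] [|b']] [|c']]; rewrite /pbw_delta /= ?xpair_eqE ?eqE /=.
all: by rewrite ?andbF ?expr0 ?divr1 ?mul1r ?mulr0 ?addr0.
Qed.

Lemma pbw_monomial a b c :
  (pbw_L ^+ a * pbw_P ^+ b * pbw_X ^+ c) (pbw_delta (0, 0, 0)) = pbw_delta (a, b, c).
Proof.
rewrite /= !lend_exprE.
have -> : iter c pbw_X (pbw_delta (0, 0, 0)) = pbw_delta (0, 0, c).
  by elim: c => // c IH; rewrite iterS IH pbw_X_delta.
have -> : iter b pbw_P (pbw_delta (0, 0, c)) = pbw_delta (0, b, c).
  by elim: b => // b IH; rewrite iterS IH pbw_P_delta.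
by elim: a => // a IH; rewrite iterS IH pbw_L_delta.
Qed.

End PBWRepresentation.

Local Open Scope complex_scope.

Section HeisenbergAlgebra.
Variables (R : realType) (q hb : R) (H : algType R[i]) (x p L : H).
Hypothesis q_neq0 : q != 0.
Hypothesis Hpres : heis_presentation q hb x p L.

Local Notation C := R[i].
Local Notation Q := (q%:C).
Local Notation s := (sqrtq q).
Local Notation kap := (iC R * hb%:C * (sqrtq q)^-1).

Lemma qC_neq0 : Q != 0.
Proof. by apply: contra q_neq0 => /eqP[->]. Qed.

Lemma sqrtq_sqr : s ^+ 2 = Q.
Proof. exact: sqr_sqrtc. Qed.

Lemma sqrtq_neq0 : s != 0.
Proof. by apply: contra qC_neq0 => /eqP s0; rewrite -sqrtq_sqr s0 expr0n. Qed.

Lemma heis_xL : x * L = Q *: (L * x).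
Proof. by case: Hpres => -[_ -> _] _; rewrite scalerA mulfV ?qC_neq0 // scale1r. Qed.

Lemma heis_pL : p * L = Q^-1 *: (L * p).
Proof. by case: Hpres => -[_ _ ->] _; rewrite scalerA mulVf ?qC_neq0 // scale1r. Qed.

Lemma heis_xp : x * p = Q^-1 *: (p * x) + kap *: L.
Proof.
case: Hpres => -[/eqP + _ _] _; rewrite subr_eq => /eqP e.
rewrite -[x * p](scalerK sqrtq_neq0) e scalerDr !scalerA -sqrtq_sqr expr2 invfM.
by rewrite addrC [s^-1 * (_ * _)]mulrC.
Qed.

Lemma pbw_heis_rel : heis_rel q hb (pbw_X Q kap) (pbw_P Q) (pbw_L C).
Proof.
split; [apply/eqP; rewrite subr_eq; apply/eqP | apply: pbw_LX | apply: pbw_LP];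
  rewrite ?qC_neq0 //.
by rewrite (pbw_XP _ sqrtq_neq0) ?sqrtq_sqr // mulfVK ?sqrtq_neq0 // addrC.
Qed.

Definition heis_pbw : {lrmorphism H -> lend (nat * nat * nat) C} :=
  sval (cid (proj2 Hpres _ _ _ _ pbw_heis_rel)).

Lemma heis_pbw_gens :
  [/\ heis_pbw x = pbw_X Q kap, heis_pbw p = pbw_P Q & heis_pbw L = pbw_L C].
Proof. by case: (svalP (cid (proj2 Hpres _ _ _ _ pbw_heis_rel))). Qed.

(* The coordinates of [h] in the basis of monomials L^a p^b x^c. *)
Definition pbw_coords (h : H) : nat * nat * nat -> C^o :=
  heis_pbw h (pbw_delta C (0, 0, 0)).

Fact pbw_coords_is_linear : linear pbw_coords.
Proof. by move=> k h1 h2; rewrite /pbw_coords linearP. Qed.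
HB.instance Definition _ := GRing.isLinear.Build C H (nat * nat * nat -> C^o) *:%R
  pbw_coords pbw_coords_is_linear.

Lemma pbw_coords_monomial a b c :
  pbw_coords (L ^+ a * p ^+ b * x ^+ c) = pbw_delta C (a, b, c).
Proof.
case: heis_pbw_gens => hx hp hL.
by rewrite /pbw_coords !rmorphM !rmorphXn -(pbw_monomial Q kap a b c) -hx -hp -hL.
Qed.

Lemma pbw_coords_horner P b c a' b' c' :
  pbw_coords (horner_lr L P * p ^+ b * x ^+ c) (a', b', c') =
  P`_a' * ((b' == b) && (c' == c))%:R.
Proof.
have -> : horner_lr L P = \sum_(i < size P) P`_i *: L ^+ i.
  rewrite -{1}[P]coefK poly_def linear_sum; apply: eq_bigr => i _.
  by rewrite linearZ rmorphXn /= horner_lrX.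
rewrite !mulr_suml raddf_sum fct_sumE /=.
under eq_bigr => i _ do rewrite -!scalerAl linearZ /= pbw_coords_monomial fctE.
rewrite /pbw_delta /=.
under eq_bigr => i _ do rewrite !xpair_eqE -andbA -mulnb natrM /GRing.scale /= mulrA.
by rewrite -mulr_suml sumr_delta; case: ltnP => // hP; rewrite nth_default.
Qed.

Lemma pbw_coords_ore_poly c k a b i :
  pbw_coords (ore_poly (horner_lr L) p c * x ^+ k) (a, b, i) = (c`_b)`_a * (i == k)%:R.
Proof.
rewrite /ore_poly mulr_suml raddf_sum fct_sumE /=.
under eq_bigr => j _ do rewrite pbw_coords_horner -mulnb natrM mulrA.
rewrite -mulr_suml (@sumr_delta _ _ (fun j => c`_j`_a)).
by case: ltnP => // hc; rewrite (nth_default _ hc) coef0.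
Qed.

Lemma pbw_coords_ore_poly0 c a b :
  pbw_coords (ore_poly (horner_lr L) p c) (a, b, 0) = (c`_b)`_a.
Proof. by have := pbw_coords_ore_poly c 0 a b 0; rewrite expr0 mulr1 eqxx mulr1. Qed.

Lemma heis_generated (S : subalgClosed H) :
  x \in S -> p \in S -> L \in S -> forall h, h \in S.
Proof.
move=> xS pS LS h; have relH := proj1 Hpres.
have relS : heis_rel q hb (Sub x xS : subalg S) (Sub p pS) (Sub L LS).
  by case: relH => e1 e2 e3; split; apply: val_inj.
have [f [fx fp fL _]] := proj2 Hpres _ _ _ _ relS.
have [f0 [_ _ _ uniq]] := proj2 Hpres _ _ _ _ relH.
suff <- : subalg_val (f h) = h by exact: valP.
have -> : subalg_val (f h) = f0 h.
  by apply: (uniq (subalg_val \o f : {lrmorphism H -> H})); rewrite /= ?fx ?fp ?fL.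
by apply/esym/(uniq (idfun : {lrmorphism H -> H})).
Qed.

Lemma heis_p_horner P : p * horner_lr L P = horner_lr L (P \Po (Q^-1 *: 'X)) * p.
Proof. exact: horner_alg_skew_comm heis_pL. Qed.

Lemma heis_p_comm P : exists PP : {poly C} * {poly C},
  p * horner_lr L P = horner_lr L PP.1 * p + horner_lr L PP.2.
Proof. by exists (P \Po (Q^-1 *: 'X), 0); rewrite rmorph0 addr0 heis_p_horner. Qed.

Definition Lp_polys : subalgClosed H := ore_polys_subalg heis_p_comm.
Local Notation Lp := (subalg Lp_polys).

Lemma Lp_polysL : L \in Lp_polys.
Proof. by rewrite -{1}(horner_lrX L); apply: ore_polys_iota. Qed.

Lemma Lp_polysp : p \in Lp_polys.
Proof. exact: ore_polys_t. Qed.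

Definition L1 : Lp := Sub L Lp_polysL.
Definition p1 : Lp := Sub p Lp_polysp.

Lemma val_horner_L1 P : subalg_val (horner_lr L1 P) = horner_lr L P.
Proof.
rewrite -[LHS]/((subalg_val \o horner_lr L1) P).
have := poly_alg_initial (subalg_val \o horner_lr L1 : {lrmorphism {poly C} -> H}).
by move=> ->; rewrite /= horner_lrX.
Qed.

Lemma val_Lp_ore_poly c :
  subalg_val (ore_poly (horner_lr L1) p1 c) = ore_poly (horner_lr L) p c.
Proof.
by rewrite raddf_sum; apply: eq_bigr => i _ /=; rewrite rmorphXn val_horner_L1.
Qed.

Lemma Lp_span (a : Lp) : exists c, a = ore_poly (horner_lr L1) p1 c.
Proof.
have /ore_polyP[c e] := valP a.
by exists c; apply: val_inj; rewrite /= val_Lp_ore_poly.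
Qed.

Lemma Lp_free c : ore_poly (horner_lr L1) p1 c = 0 -> forall i, c`_i = 0.
Proof.
move=> /(congr1 subalg_val); rewrite val_Lp_ore_poly raddf0 => c0 i.
by apply/polyP => a; rewrite coef0 -pbw_coords_ore_poly0 c0 raddf0.
Qed.

Lemma Lp_ore_ext : is_ore_ext (horner_lr L1) (comp_poly (Q^-1 *: 'X)) \0 p1.
Proof.
split=> [P | a | ]; [apply: val_inj | exact: Lp_span | exact: Lp_free].
by rewrite /= !val_horner_L1 rmorph0 addr0 heis_p_horner.
Qed.

Lemma Lp_polys_x_stable : {subset Lp_polys <= ore_stable Lp_polys x}.
Proof.
apply: ore_polys_sub => [P|].
  apply: rpred_horner_alg; apply/(ore_stableP Lp_polys x L).
  split; first exact: Lp_polysL.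
  by exists (Q *: L), 0; rewrite rpred0 rpredZ ?Lp_polysL // addr0 heis_xL -scalerAl.
apply/(ore_stableP Lp_polys x p); split; first exact: Lp_polysp.
exists (Q^-1 *: p), (kap *: L); rewrite !rpredZ ?Lp_polysL ?Lp_polysp //.
by rewrite heis_xp -scalerAl.
Qed.

Lemma heis_x_comm (a : Lp) : exists a12 : Lp * Lp,
  x * subalg_val a = subalg_val a12.1 * x + subalg_val a12.2.
Proof.
have /Lp_polys_x_stable/ore_stableP[_ [b1 [b2 [b1P b2P e]]]] := valP a.
by exists (Sub b1 b1P, Sub b2 b2P); rewrite !SubK.
Qed.

Lemma pbw_coords_Lp_mulX (a : Lp) k a' b i :
  pbw_coords (subalg_val a * x ^+ k) (a', b, i) =
  pbw_coords (subalg_val a) (a', b, 0) * (i == k)%:R.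
Proof.
have /ore_polyP[c ->] := valP a.
by rewrite pbw_coords_ore_poly pbw_coords_ore_poly0.
Qed.

Lemma Lp_coords_eq0 (a : Lp) :
  (forall a' b, pbw_coords (subalg_val a) (a', b, 0) = 0) -> a = 0.
Proof.
have [c ->] := Lp_span a; rewrite val_Lp_ore_poly => c0.
rewrite /ore_poly big1 // => i _; suff -> : c`_i = 0 by rewrite rmorph0 mul0r.
by apply/polyP => a'; rewrite coef0 -pbw_coords_ore_poly0 c0.
Qed.

Lemma heis_x_free (c : seq Lp) : ore_poly subalg_val x c = 0 -> forall i, c`_i = 0.
Proof.
move=> c0 k; case: (ltnP k (size c)) => hk; last by rewrite nth_default.
apply: Lp_coords_eq0 => a b.
have := congr1 (fun h => pbw_coords h (a, b, k)) c0.
rewrite /= raddf0 /ore_poly raddf_sum fct_sumE /=.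
under eq_bigr => i _ do rewrite pbw_coords_Lp_mulX.
by rewrite (@sumr_delta _ _ (fun i => pbw_coords (subalg_val c`_i) (a, b, 0))) hk.
Qed.

Lemma heis_x_span h : h \in ore_polys (subalg_val : Lp -> H) x.
Proof.
apply: (heis_generated (S := ore_polys_subalg heis_x_comm)); first exact: ore_polys_t.
  by rewrite -[p]/(subalg_val p1) ore_polys_iota.
by rewrite -[L]/(subalg_val L1) ore_polys_iota.
Qed.

Lemma heis_x_comm_unique (a : Lp) : exists! a12 : Lp * Lp,
  x * subalg_val a = subalg_val a12.1 * x + subalg_val a12.2.
Proof. exact: ore_comm_unique heis_x_free heis_x_comm a. Qed.

Local Notation sx := (ore_sigma heis_x_comm_unique).
Local Notation dx := (ore_delta heis_x_comm_unique).

Lemma heis_sx_L1 : sx L1 = Q *: L1 /\ dx L1 = 0.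
Proof. by apply: ore_sigma_deltaE; rewrite linearZ raddf0 addr0 /= -scalerAl heis_xL. Qed.

Lemma heis_sx_p1 : sx p1 = Q^-1 *: p1 /\ dx p1 = kap *: L1.
Proof. by apply: ore_sigma_deltaE; rewrite !linearZ /= -scalerAl heis_xp. Qed.

Lemma heis_sx_horner P : sx (horner_lr L1 P) = horner_lr L1 (P \Po (Q *: 'X)).
Proof.
rewrite -[LHS]/((sx \o horner_lr L1) P) -[RHS]/((horner_lr L1 \o comp_poly (Q *: 'X)) P).
rewrite (poly_alg_initial (sx \o horner_lr L1 : {lrmorphism {poly C} -> Lp})).
rewrite (poly_alg_initial
  (horner_lr L1 \o comp_poly (Q *: 'X) : {lrmorphism {poly C} -> Lp})).
by rewrite /= horner_lrX comp_polyX linearZ /= horner_lrX (proj1 heis_sx_L1).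
Qed.

Lemma heis_sx_ore_poly c : sx (ore_poly (horner_lr L1) p1 c) =
  ore_poly (horner_lr L1) p1 (mkseq (fun j => Q^-1 ^+ j *: (c`_j \Po (Q *: 'X))) (size c)).
Proof.
rewrite /ore_poly size_mkseq rmorph_sum; apply: eq_bigr => j _.
rewrite rmorphM rmorphXn /= heis_sx_horner (proj1 heis_sx_p1) exprZn -scalerAr.
by rewrite nth_mkseq // linearZ -scalerAl.
Qed.

Lemma heis_sx_inj : injective sx.
Proof.
apply: raddf_inj => a; have [c ->] := Lp_span a; rewrite /= heis_sx_ore_poly => /Lp_free c0.
rewrite /ore_poly big1 // => j _; suff -> : c`_j = 0 by rewrite rmorph0 mul0r.
move: (c0 j); rewrite nth_mkseq // => /eqP.
rewrite scaler_eq0 expf_eq0 invr_eq0 (negbTE qC_neq0) andbF /=.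
by rewrite comp_poly_eq0 ?size_scale ?size_polyX ?qC_neq0 // => /eqP.
Qed.

Lemma heis_sx_surj b : exists a, sx a = b.
Proof.
have [c ->] := Lp_span b.
exists (ore_poly (horner_lr L1) p1
          (mkseq (fun j => Q ^+ j *: (c`_j \Po (Q^-1 *: 'X))) (size c))).
rewrite heis_sx_ore_poly size_mkseq /ore_poly size_mkseq; apply: eq_bigr => j _.
rewrite !nth_mkseq // comp_polyZ scalerA -exprMn mulVf ?qC_neq0 // expr1n scale1r.
by have := comp_polyZXK (invr_neq0 qC_neq0); rewrite invrK => ->.
Qed.

Lemma heis_sx_bijective : bijective sx.
Proof.
have /choice[g gK] := heis_sx_surj.
by exists g => a; [apply: heis_sx_inj; rewrite gK | exact: gK].
Qed.

End HeisenbergAlgebra.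

Theorem mainTheorem1 (R : realType) (q hb : R) (q_neq0 : q != 0)
    (H : algType R[i]) (x p L : H) (Hpres : heis_presentation q hb x p L) :
  exists (A1 : algType R[i])
         (i0 : {lrmorphism {poly R[i]} -> A1}) (i1 : {lrmorphism A1 -> H})
         (p1 : A1)
         (sp : {lrmorphism {poly R[i]} -> {poly R[i]}})
         (dp : {linear {poly R[i]} -> {poly R[i]}})
         (sx : {lrmorphism A1 -> A1}) (dx : {linear A1 -> A1}),
    [/\ [/\ bijective sp, sigma_derivation sp dp,
            bijective sx & sigma_derivation sx dx],
        [/\ sp 'X = (q%:C)^-1 *: 'X, dp 'X = 0,
            sx (i0 'X) = q%:C *: i0 'X & dx (i0 'X) = 0],
        sx p1 = (q%:C)^-1 *: p1 /\
          dx p1 = (iC R * hb%:C * (sqrtq q)^-1) *: i0 'X,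
        is_ore_ext i0 sp dp p1 /\ is_ore_ext i1 sx dx x
      & i1 p1 = p /\ i1 (i0 'X) = L ].
Proof.
pose xcomm := heis_x_comm_unique (q_neq0 := q_neq0) (Hpres := Hpres).
exists (subalg (Lp_polys q_neq0 Hpres)), (horner_lr (L1 q_neq0 Hpres)), subalg_val,
  (p1 q_neq0 Hpres), (comp_poly ((q%:C)^-1 *: 'X)), \0, (ore_sigma xcomm), (ore_delta xcomm).
rewrite /= horner_lrX comp_polyX; split.
- split; first exact/comp_polyZX_bij/invr_neq0/qC_neq0.
  + by move=> a b; rewrite /= mulr0 mul0r addr0.
  + exact: heis_sx_bijective.
  + exact: ore_delta_sigma_derivation.
- by case: (heis_sx_L1 q_neq0 Hpres).
- exact: heis_sx_p1.
- split; first exact: Lp_ore_ext.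
  by apply: is_ore_ext_ore_polys; [exact: heis_x_free | exact: heis_x_span].
- by [].
Qed.
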